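(* Let $\Gamma\le\mathrm{Iso}(\mathbb{R}^{r,s})$ be a subgroup whose centralizer in $\mathrm{Iso}(\mathbb{R}^{r,s})$ has an open orbit in $\mathbb{R}^{r,s}$, and let $n=r+s$. If the linear holonomy group $\mathrm{hol}(\Gamma)$ is non-abelian, then $n\ge 8$.
   Context: $\mathbb{R}^{r,s}$ denotes $\mathbb{R}^{n}$, $n=r+s$, with a nondegenerate symmetric bilinear form of signature $(r,s)$; $\mathrm{Iso}(\mathbb{R}^{r,s})$ is its group of affine isometries, whose elements are written $\gamma=(I+A,v)\colon x\mapsto(I+A)x+v$; $\mathrm{hol}(\Gamma)=\{I+A\mid (I+A,v)\in\Gamma\}$. Known facts (Wolf) for such $\Gamma$: every $(I+A,v)\in\Gamma$ satisfies $A^2=0$, $Av=0$, $\langle Ax,y\rangle=-\langle x,Ay\rangle$, $\ker A=(\operatorname{im}A)^\perp$, $\operatorname{im}A$ totally isotropic; for $\gamma_i=(I+A_i,v_i)\in\Gamma$ one has $A_1A_2A_3=0$ and $[\gamma_1,\gamma_2]=(I+2A_1A_2,2A_1v_2)$; $\mathrm{hol}(\Gamma)$ is abelian iff $A_1A_2=0$ for all $(I+A_1,v_1),(I+A_2,v_2)\in\Gamma$. *)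

From Stdlib Require Import Reals.
From mathcomp Require Import all_boot.

Definition vec (n : nat) := 'I_n -> R.

Definition vadd {n} (x y : vec n) : vec n := fun i => Rplus (x i) (y i).
Definition vsub {n} (x y : vec n) : vec n := fun i => Rminus (x i) (y i).

Definition mxact {n} (M : 'I_n -> 'I_n -> R) (x : vec n) : vec n :=
  fun i => \big[Rplus/R0]_(j < n) Rmult (M i j) (x j).

Definition sgn_rs (r : nat) {n} (i : 'I_n) : R :=
  if (nat_of_ord i < r)%N then R1 else Ropp R1.

Definition form (r s : nat) (x y : vec (r + s)) : R :=
  \big[Rplus/R0]_(i < r + s) Rmult (sgn_rs r i) (Rmult (x i) (y i)).

Definition isIso (r s : nat) (f : vec (r + s) -> vec (r + s)) : Prop :=
  exists (M : 'I_(r + s) -> 'I_(r + s) -> R) (v : vec (r + s)),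
    (forall x, f x = vadd (mxact M x) v) /\
    (forall x y, form r s (mxact M x) (mxact M y) = form r s x y).

Definition is_subgroup_Iso (r s : nat) (G : (vec (r + s) -> vec (r + s)) -> Prop)
  : Prop :=
  (forall f, G f -> isIso r s f) /\
  G (fun x => x) /\
  (forall f g, G f -> G g -> G (fun x => f (g x))) /\
  (forall f, G f -> exists g, G g /\ (forall x, g (f x) = x) /\ (forall x, f (g x) = x)).

Definition centralizer_Iso (r s : nat) (G : (vec (r + s) -> vec (r + s)) -> Prop)
  (h : vec (r + s) -> vec (r + s)) : Prop :=
  isIso r s h /\ (forall g, G g -> forall x, h (g x) = g (h x)).

Definition iso_orbit {n} (H : (vec n -> vec n) -> Prop) (x : vec n) (y : vec n) : Prop :=
  exists h, H h /\ y = h x.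

Definition is_open {n} (U : vec n -> Prop) : Prop :=
  forall y, U y -> exists eps, Rlt R0 eps /\
    forall z : vec n, (forall i, Rlt (Rabs (Rminus (z i) (y i))) eps) -> U z.

(* Linear part of an affine map f: x |-> f x - f 0 (i.e. I + A for γ = (I+A,v)). *)
Definition linpart {n} (f : vec n -> vec n) : vec n -> vec n :=
  fun x => vsub (f x) (f (fun _ => R0)).

Definition hol_abelian {n} (G : (vec n -> vec n) -> Prop) : Prop :=
  forall g1 g2, G g1 -> G g2 ->
    forall x, linpart g1 (linpart g2 x) = linpart g2 (linpart g1 x).

From Stdlib Require Import Reals Classical FunctionalExtensionality.
From mathcomp Require Import all_boot ssralg ssrnum zmodp matrix mxalgebra.
From mathcomp Require Import Rstruct ring lra.

(* For [gamma = (I + A, v)] in [Gamma] and [h] in the centralizer, the linear part of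
   [h] carries the displacement [gamma x - x = A x + v] at [x] to the one at [h x].
   Since [h] is an isometry, [<A1 x + v1, A2 x + v2>] is constant on the open orbit,
   so its quadratic part [<A1 z, A2 z>] vanishes identically.  Together with the
   isometry condition this makes the [A_i] skew, of square zero and pairwise
   anticommuting.  If [hol(Gamma)] is not abelian, some [A1 A2] is nonzero and
   [E A1 A2] is a nonzero alternating matrix, of rank at least 2.  Frobenius'
   inequality for [A1 A2 A1 = 0] then gives [rank A2 >= 4], and [A2^2 = 0] gives
   [n >= 2 rank A2 >= 8]. *)

Set Implicit Arguments.
Unset Strict Implicit.
Unset Printing Implicit Defensive.

Import GRing.Theory Num.Theory.
Local Open Scope ring_scope.

Section CharNot2.
Variable F : fieldType.
Hypothesis two_neq0 : 2%:R != 0 :> F.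

Lemma alternating_mx_rank_ge2 n (B : 'M[F]_n) : B^T = - B -> B != 0 -> (2 <= \rank B)%N.
Proof.
move=> B_alt B_neq0.
have /existsP [i /existsP [j Bij_neq0]] : [exists i, exists j, B i j != 0].
  apply: contraNT B_neq0 => /existsPn none; apply/eqP/matrixP => i j; rewrite mxE.
  by move/existsPn/(_ j)/negPn/eqP: (none i).
have Bji k l : B l k = - B k l.
  by have := congr1 (fun M : 'M_n => M k l) B_alt; rewrite /= !mxE.
have Bii k : B k k = 0.
  have : 2%:R * B k k == 0 by rewrite mulr_natl mulr2n {1}Bji addNr.
  by rewrite mulf_eq0 (negbTE two_neq0) => /eqP.
pose f (k : 'I_2) := if val k == 0%N then i else j.
pose Q := mxsub f f B.
(* [Q] is the 2x2 block [[0, b], [-b, 0]] with [b = B i j], so [Q^2 = -b^2]. *)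
have QQ : Q *m Q = (- (B i j * B i j))%:M.
  apply/matrixP => k l; rewrite !mxE !big_ord_recr big_ord0 /= !mxE /f /=.
  case: k => [[|[|//]] hk] /=; case: l => [[|[|//]] hl] /=;
    by rewrite ?Bii ?(Bji j i) ?mul0r ?mulr0 ?add0r ?addr0 ?mulrN ?mulNr ?opprK ?mulr1n ?mulr0n.
have Q_unit : Q \in unitmx.
  have bb_neq0 : - (B i j * B i j) != 0 by rewrite oppr_eq0 mulf_neq0.
  have := @mulmx1_unit _ _ Q ((- (B i j * B i j))^-1 *: Q).
  by rewrite -scalemxAr QQ scale_scalar_mx mulVf // => /(_ erefl) [].
rewrite -[2%N](mxrank_unit Q_unit).
have -> : Q = rowsub f (colsub f B) by apply/matrixP => k l; rewrite !mxE.
rewrite rowsubE.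
apply: leq_trans (mxrankM_maxr _ _) _.
by rewrite -[B]mulmx1 -mulmx_colsub mulmx1; apply: mxrankM_maxl.
Qed.

Lemma quadratic_coeff_eq0 m p (L Q : 'M[F]_(m, p)) (t : F) : t != 0 ->
  t *: L + (t * t) *: Q = 0 -> (t + t) *: L + ((t + t) * (t + t)) *: Q = 0 -> Q = 0.
Proof.
move=> t_neq0 /eqP; rewrite addr_eq0 => /eqP tL.
rewrite scalerDl tL -!scaleNr -!scalerDl => /eqP; rewrite scalemx_eq0.
have -> : - (t * t) + - (t * t) + (t + t) * (t + t) = 2%:R * (t * t) by ring.
by rewrite (negbTE (mulf_neq0 two_neq0 (mulf_neq0 t_neq0 t_neq0))) => /eqP.
Qed.

Variables (n : nat) (E : 'M[F]_n).
Hypotheses (E_sym : E^T = E) (E_unit : E \in unitmx).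

Lemma trmx_pairing (A B : 'M[F]_n) : (A^T *m E *m B)^T = B^T *m E *m A.
Proof. by rewrite !trmx_mul trmxK E_sym mulmxA. Qed.

Lemma isometry_skew (A : 'M[F]_n) :
  (1 + A)^T *m E *m (1 + A) = E -> A^T *m E *m A = 0 -> A^T *m E = - (E *m A).
Proof.
move=> isoA nullA; apply/eqP; rewrite -addr_eq0; apply/eqP.
move: isoA; rewrite [(1 + A)^T]linearD /= trmx1 !mulmxDl !mulmxDr !mul1mx !mulmx1 nullA addr0.
by rewrite -addrA => /(canRL (addKr E)); rewrite addNr addrC.
Qed.

Lemma skew_null_sqr0 (A : 'M[F]_n) :
  A^T *m E = - (E *m A) -> A^T *m E *m A = 0 -> A *m A = 0.
Proof.
move=> skewA nullA.
by rewrite -(mulKmx E_unit (A *m A)) [E *m _]mulmxA -[E *m A]opprK -skewA mulNmx nullA oppr0 mulmx0.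
Qed.

Lemma skew_null_anticomm (A1 A2 : 'M[F]_n) :
  A1^T *m E = - (E *m A1) -> A2^T *m E = - (E *m A2) ->
  A1^T *m E *m A2 + A2^T *m E *m A1 = 0 -> A1 *m A2 = - (A2 *m A1).
Proof.
move=> skew1 skew2; rewrite skew1 skew2 !mulNmx -!mulmxA -opprD -mulmxDr.
move/eqP; rewrite oppr_eq0 => /eqP h.
apply/eqP; rewrite -addr_eq0; apply/eqP.
by rewrite -(mulKmx E_unit (_ + _)) h mulmx0.
Qed.

Lemma skew_anticomm_dim_ge8 (A1 A2 : 'M[F]_n) :
  A1^T *m E = - (E *m A1) -> A2^T *m E = - (E *m A2) ->
  A1 *m A1 = 0 -> A2 *m A2 = 0 -> A1 *m A2 = - (A2 *m A1) -> A1 *m A2 != 0 ->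
  (8 <= n)%N.
Proof.
move=> skew1 skew2 sqr1 sqr2 anticomm C_neq0.
set C := A1 *m A2.
have rankC : (2 <= \rank C)%N.
  apply: leq_trans (mxrankM_maxr E C).
  apply: alternating_mx_rank_ge2.
    rewrite trmx_mul E_sym /C trmx_mul -mulmxA skew1 mulmxN [A2^T *m _]mulmxA skew2.
    by rewrite mulNmx -!mulmxA anticomm mulmxN.
  by apply: contra_neq C_neq0 => EC0; rewrite -/C -(mulKmx E_unit C) EC0 mulmx0.
have frob : (\rank C + \rank (A2 *m A1) <= \rank A2)%N.
  have := mxrank_Frobenius A1 A2 A1.
  by rewrite -/C {2}/C anticomm mulNmx -mulmxA sqr1 mulmx0 oppr0 mxrank0 addn0.
have rankC' : \rank (A2 *m A1) = \rank C.
  by rewrite /C anticomm mxrank_opp.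
have rankA2 : (4 <= \rank A2)%N.
  by apply: leq_trans frob; rewrite rankC'; apply: (leq_add rankC rankC).
apply: leq_trans (mulmx0_rank_max sqr2).
exact: (leq_add rankA2 rankA2).
Qed.

Lemma noncommuting_isometries_dim_ge8 (A1 A2 : 'M[F]_n) :
  (1 + A1)^T *m E *m (1 + A1) = E -> (1 + A2)^T *m E *m (1 + A2) = E ->
  A1^T *m E *m A1 + A1^T *m E *m A1 = 0 -> A2^T *m E *m A2 + A2^T *m E *m A2 = 0 ->
  A1^T *m E *m A2 + A2^T *m E *m A1 = 0 ->
  (1 + A1) *m (1 + A2) != (1 + A2) *m (1 + A1) -> (8 <= n)%N.
Proof.
have halve (X : 'M[F]_n) : X + X = 0 -> X = 0.
  by rewrite -mulr2n -scaler_nat => /eqP; rewrite scalemx_eq0 (negbTE two_neq0) => /eqP.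
move=> iso1 iso2 /halve null1 /halve null2 null12 noncomm.
have skew1 := isometry_skew iso1 null1; have skew2 := isometry_skew iso2 null2.
have anticomm := skew_null_anticomm skew1 skew2 null12.
apply: (skew_anticomm_dim_ge8 skew1 skew2 (skew_null_sqr0 skew1 null1)
  (skew_null_sqr0 skew2 null2) anticomm).
apply: contraNneq noncomm => A12_0.
have A21_0 : A2 *m A1 = 0 by rewrite -[A2 *m A1]opprK -anticomm A12_0 oppr0.
by rewrite !mulmxDl !mulmxDr !mul1mx !mulmx1 A12_0 A21_0 !addr0 -!addrA (addrC A1).
Qed.

End CharNot2.

Lemma commuting_affine_displacement (F : pzRingType) n (A H : 'M[F]_n) (w wh u : 'cV[F]_n) :
  (1 + A) *m (H *m u + wh) + w = H *m ((1 + A) *m u + w) + wh ->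
  A *m (H *m u + wh) + w = H *m (A *m u + w).
Proof.
rewrite !mulmxDl !mul1mx !mulmxDr -!addrA => /addrI.
by rewrite (addrC (H *m w)) [H *m (A *m u) + (_ + _)]addrCA => /addrI.
Qed.

Lemma delta_pairing (F : pzRingType) n (X : 'M[F]_n) i j :
  ((delta_mx i 0 : 'cV_n)^T *m X *m (delta_mx j 0 : 'cV_n)) 0 0 = X i j.
Proof. by rewrite trmx_delta -rowE -colE !mxE. Qed.

Lemma skew_of_quad_form_eq0 (F : numFieldType) n (X : 'M[F]_n) :
  (forall z : 'cV[F]_n, (forall k, `|z k 0| <= 2) -> z^T *m X *m z = 0) -> X + X^T = 0.
Proof.
move=> qX0.
have entryD (A B : 'M[F]_1) : (A + B) 0 0 = A 0 0 + B 0 0 by rewrite mxE.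
have Xii i : X i i = 0.
  rewrite -delta_pairing qX0 ?mxE // => k.
  by rewrite mxE eqxx andbT normr_nat ler_nat; case: (k == i).
apply/matrixP => i j; rewrite !mxE.
have : ((delta_mx i 0 + delta_mx j 0 : 'cV[F]_n)^T *m X *m
          (delta_mx i 0 + delta_mx j 0 : 'cV[F]_n)) 0 0 = 0.
  rewrite qX0 ?mxE // => k.
  by rewrite !mxE !eqxx !andbT -natrD normr_nat ler_nat; case: (k == i); case: (k == j).
rewrite [(_ + _)^T]linearD /= mulmxDl !mulmxDr !mulmxDl !entryD !delta_pairing !Xii.
by rewrite add0r addr0 addrC.
Qed.

Lemma quadratic_part_eq0_of_const_on_ball (F : realFieldType) n (E A1 A2 : 'M[F]_n)
    (v1 v2 u0 : 'cV[F]_n) (eps : F) :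
  0 < eps ->
  (forall u : 'cV[F]_n, (forall k, `|u k 0 - u0 k 0| < eps) ->
     (A1 *m u + v1)^T *m E *m (A2 *m u + v2) = (A1 *m u0 + v1)^T *m E *m (A2 *m u0 + v2)) ->
  forall z : 'cV[F]_n, (forall k, `|z k 0| <= 2) -> (A1 *m z)^T *m E *m (A2 *m z) = 0.
Proof.
move=> eps_gt0 const z z_small.
pose t := eps / 8%:R.
have t_gt0 : 0 < t by rewrite divr_gt0 ?ltr0n.
set D1 := A1 *m u0 + v1; set D2 := A2 *m u0 + v2.
set Z1 := A1 *m z; set Z2 := A2 *m z.
have along_z c : 0 <= c <= t + t ->
    c *: (Z1^T *m E *m D2 + D1^T *m E *m Z2) + (c * c) *: (Z1^T *m E *m Z2) = 0.
  case/andP=> c_ge0 c_le2t.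
  have near k : `|(u0 + c *: z) k 0 - u0 k 0| < eps.
    rewrite !mxE addrC addKr normrM (ger0_norm c_ge0).
    have := z_small k; have := normr_ge0 (z k 0); rewrite /t in c_le2t; nra.
  move: (const _ near).
  rewrite !(mulmxDr _ u0) -!scalemxAr !(addrAC _ (c *: _)) -/D1 -/D2 -/Z1 -/Z2.
  rewrite [(_ + _)^T]linearD /= linearZ /= (mulmxDl _ _ E) (mulmxDr _ D2) !mulmxDl.
  rewrite -!scalemxAl -!scalemxAr scalerA -addrA => /(canRL (addKr _)); rewrite addNr => <-.
  by rewrite scalerDr addrA.
have two_neq0 : 2%:R != 0 :> F by rewrite pnatr_eq0.
by apply: (quadratic_coeff_eq0 two_neq0 (lt0r_neq0 t_gt0)); apply: along_z; apply/andP; split; lra.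
Qed.

Definition col_of_vec n (x : vec n) : 'cV[R]_n := \col_i x i.
Definition vec_of_col n (u : 'cV[R]_n) : vec n := fun i => u i 0.
Definition mx_of_fun n (M : 'I_n -> 'I_n -> R) : 'M[R]_n := \matrix_(i, j) M i j.
Definition form_mx r s : 'M[R]_(r + s) := diag_mx (\row_i sgn_rs r i).

(* [f] is the paper's [(I + A, w)] in coordinates. *)
Definition affine_repr n (f : vec n -> vec n) (A : 'M[R]_n) (w : 'cV[R]_n) : Prop :=
  forall u, col_of_vec (f (vec_of_col u)) = (1 + A) *m u + w.

Lemma col_of_vecK n : cancel (@col_of_vec n) (@vec_of_col n).
Proof. by move=> x; apply: functional_extensionality => i; rewrite /vec_of_col mxE. Qed.

Lemma vec_of_colK n : cancel (@vec_of_col n) (@col_of_vec n).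
Proof. by move=> u; apply/matrixP => i j; rewrite mxE (ord1 j). Qed.

Lemma col_of_vec_inj n : injective (@col_of_vec n).
Proof. exact: can_inj (@col_of_vecK n). Qed.

Lemma col_of_vec_mxact n M (x : vec n) : col_of_vec (mxact M x) = mx_of_fun M *m col_of_vec x.
Proof. by apply/matrixP => i j; rewrite !mxE; apply: eq_bigr => k _; rewrite !mxE. Qed.

Lemma col_of_vec_add n (x y : vec n) : col_of_vec (vadd x y) = col_of_vec x + col_of_vec y.
Proof. by apply/matrixP => i j; rewrite !mxE. Qed.

Lemma col_of_vec_sub n (x y : vec n) : col_of_vec (vsub x y) = col_of_vec x - col_of_vec y.
Proof. by apply/matrixP => i j; rewrite !mxE. Qed.

Lemma formE r s (x y : vec (r + s)) :
  form r s x y = ((col_of_vec x)^T *m form_mx r s *m col_of_vec y) 0 0.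
Proof.
rewrite /form /form_mx mul_mx_diag !mxE; apply: eq_bigr => k _.
by rewrite !mxE !Rstruct.RmultE mulrCA mulrA.
Qed.

Lemma form_mx_sym r s : (form_mx r s)^T = form_mx r s.
Proof. exact: tr_diag_mx. Qed.

Lemma form_mx_unit r s : form_mx r s \in unitmx.
Proof.
suff /mulmx1_unit [] : form_mx r s *m form_mx r s = 1%:M by [].
apply/matrixP => i j; rewrite mul_diag_mx !mxE.
by case: eqP => [->|_]; rewrite ?mulr0 // /sgn_rs RoppE; case: ifP; rewrite ?mulrNN mulr1.
Qed.

Lemma iso_affine_repr r s f : isIso r s f ->
  exists A w, affine_repr f A w /\ (1 + A)^T *m form_mx r s *m (1 + A) = form_mx r s.
Proof.
move=> [M [v [fE isoM]]]; exists (mx_of_fun M - 1), (col_of_vec v).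
split=> [u|]; rewrite subrKC.
  by rewrite fE col_of_vec_add col_of_vec_mxact vec_of_colK.
apply/matrixP => i j.
have := isoM (vec_of_col (delta_mx i 0)) (vec_of_col (delta_mx j 0)).
rewrite !formE !col_of_vec_mxact !vec_of_colK delta_pairing => <-.
by rewrite -(delta_pairing _ i j) trmx_mul !mulmxA.
Qed.

Lemma linpart_affine_repr n (g : vec n -> vec n) A w :
  affine_repr g A w -> forall y, col_of_vec (linpart g y) = (1 + A) *m col_of_vec y.
Proof.
move=> gE y; rewrite /linpart col_of_vec_sub.
have -> : (fun _ : 'I_n => R0) = vec_of_col 0.
  by apply: functional_extensionality => i; rewrite /vec_of_col mxE.
by rewrite -{1}(col_of_vecK y) !gE mulmx0 add0r addrK.
Qed.

Lemma centralizer_id r s (G : (vec (r + s) -> vec (r + s)) -> Prop) :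
  centralizer_Iso r s G id.
Proof.
pose one (i j : 'I_(r + s)) : R := (i == j)%:R.
split=> //; exists one, (fun _ => R0).
have mxact1 x : mxact one x = x.
  apply: col_of_vec_inj; rewrite col_of_vec_mxact.
  suff -> : mx_of_fun one = 1%:M by rewrite mul1mx.
  by apply/matrixP => i j; rewrite !mxE.
split=> [x|x y]; last by rewrite !mxact1.
apply: col_of_vec_inj; rewrite col_of_vec_add mxact1.
by apply/matrixP => i j; rewrite !mxE addr0.
Qed.

Section OpenOrbit.
Variables (r s : nat) (G : (vec (r + s) -> vec (r + s)) -> Prop) (x0 : vec (r + s)).
Local Notation orbit := (iso_orbit (centralizer_Iso r s G) x0).

Lemma displacement_pairing_const g1 g2 A1 A2 w1 w2 u :
  G g1 -> G g2 -> affine_repr g1 A1 w1 -> affine_repr g2 A2 w2 ->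
  orbit (vec_of_col u) ->
  (A1 *m u + w1)^T *m form_mx r s *m (A2 *m u + w2) =
  (A1 *m col_of_vec x0 + w1)^T *m form_mx r s *m (A2 *m col_of_vec x0 + w2).
Proof.
move=> g1G g2G g1E g2E [h [[isoh hcomm] uE]].
have [H [wh [hE isoH]]] := iso_affine_repr isoh.
set u0 := col_of_vec x0.
have u_eq : u = (1 + H) *m u0 + wh by rewrite -hE /u0 col_of_vecK -uE vec_of_colK.
have disp g A w : G g -> affine_repr g A w -> A *m u + w = (1 + H) *m (A *m u0 + w).
  move=> gG gE; rewrite u_eq; apply: commuting_affine_displacement.
  have := congr1 (@col_of_vec _) (hcomm g gG x0).
  rewrite -(col_of_vecK x0) -/u0 -[g (vec_of_col u0)]col_of_vecK -[h (vec_of_col u0)]col_of_vecK.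
  by rewrite gE !hE gE => ->.
rewrite (disp _ _ _ g1G g1E) (disp _ _ _ g2G g2E).
by rewrite -[in RHS]isoH trmx_mul !mulmxA.
Qed.

Lemma displacement_pairing_null g1 g2 A1 A2 w1 w2 :
  is_open orbit -> G g1 -> G g2 -> affine_repr g1 A1 w1 -> affine_repr g2 A2 w2 ->
  A1^T *m form_mx r s *m A2 + A2^T *m form_mx r s *m A1 = 0.
Proof.
move=> open_orbit g1G g2G g1E g2E.
have x0_in : orbit x0 by exists id; split=> //; apply: centralizer_id.
have [eps [/RltP eps_gt0 ball]] := open_orbit x0 x0_in.
rewrite -(trmx_pairing (form_mx_sym r s) A1 A2); apply: skew_of_quad_form_eq0 => z z_small.
rewrite !mulmxA -trmx_mul -mulmxA.
apply: (quadratic_part_eq0_of_const_on_ball (v1 := w1) (v2 := w2) (u0 := col_of_vec x0) eps_gt0)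
  => // u u_near.
apply: (displacement_pairing_const g1G g2G g1E g2E).
by apply: ball => i; apply/RltP; rewrite RabsE; have := u_near i; rewrite mxE.
Qed.
End OpenOrbit.

Theorem theorem5p1 (r s : nat) (G : (vec (r + s) -> vec (r + s)) -> Prop) :
  is_subgroup_Iso r s G ->
  (exists x, is_open (iso_orbit (centralizer_Iso r s G) x)) ->
  ~ hol_abelian G ->
  (8 <= r + s)%N.
Proof.
move=> [isoG _] [x0 open_orbit] nonabelian.
have [g1 [g2 [g1G [g2G [x noncomm]]]]] : exists g1 g2, G g1 /\ G g2 /\
    exists x, linpart g1 (linpart g2 x) <> linpart g2 (linpart g1 x).
  apply: NNPP => none; apply: nonabelian => g1 g2 g1G g2G x; apply: NNPP => neq.
  by apply: none; exists g1, g2; do 2!split=> //; exists x.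
have [A1 [w1 [g1E iso1]]] := iso_affine_repr (isoG _ g1G).
have [A2 [w2 [g2E iso2]]] := iso_affine_repr (isoG _ g2G).
have two_neq0 : 2%:R != 0 :> R by rewrite pnatr_eq0.
apply: (noncommuting_isometries_dim_ge8 two_neq0 (form_mx_sym r s) (form_mx_unit r s) iso1 iso2
  (displacement_pairing_null open_orbit g1G g1G g1E g1E)
  (displacement_pairing_null open_orbit g2G g2G g2E g2E)
  (displacement_pairing_null open_orbit g1G g2G g1E g2E)).
apply/eqP => comm; apply: noncomm; apply: col_of_vec_inj.
by rewrite !(linpart_affine_repr g1E, linpart_affine_repr g2E) !mulmxA comm.
Qed.
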